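(* Let $d\ge 1$ be an integer and for $s\ge 1$ let $N_d(s)$ denote the number of $(s,s+1)$-core partitions with $d$-distinct parts. Then $N_d(s)=s$ for $1\le s\le d+1$, and for all $s\ge d+2$, $$N_d(s)=N_d(s-1)+N_d(s-(d+1)).$$
   Context: A partition $\lambda=(\lambda_1,\ldots,\lambda_l)$ is a finite nonincreasing sequence of positive integers (the empty partition is allowed and counted). $\lambda$ is a partition with $d$-distinct parts if $\lambda_i-\lambda_{i+1}\ge d$ for all $1\le i\le l-1$. In the Young diagram of $\lambda$, the hook length of box $(i,j)$ is the number of boxes directly to its right, plus the number directly below it, plus one. $\lambda$ is an $(s,s+1)$-core partition if no box has hook length $s$ or $s+1$. *)

From mathcomp Require Import all_boot.
Set Implicit Arguments. Unset Strict Implicit. Unset Printing Implicit Defensive.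

(* Indices below are 0-based. *)
Definition is_partition (la : seq nat) : Prop :=
  sorted geq la /\ all (fun x => 0 < x) la.

Definition d_distinct (d : nat) (la : seq nat) : Prop :=
  forall i, i.+1 < size la -> nth 0 la i.+1 + d <= nth 0 la i.

(* Hook length of box (i,j) (row i, column j, 0-based; the box exists iff
   i < size la and j < la_i): boxes to the right (la_i - j - 1), plus boxes
   below (number of rows k > i with la_k > j), plus one. *)
Definition hook (la : seq nat) (i j : nat) : nat :=
  (nth 0 la i - j.+1) + count (fun x => j < x) (drop i.+1 la) + 1.

Definition is_box (la : seq nat) (i j : nat) : Prop :=
  i < size la /\ j < nth 0 la i.

Definition is_ss1_core (s : nat) (la : seq nat) : Prop :=
  forall i j, is_box la i j -> hook la i j <> s /\ hook la i j <> s.+1.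

Definition core_ddistinct (d s : nat) (la : seq nat) : Prop :=
  is_partition la /\ d_distinct d la /\ is_ss1_core s la.

Definition has_card (P : seq nat -> Prop) (n : nat) : Prop :=
  exists l : seq (seq nat), uniq l /\ (forall x, x \in l <-> P x) /\ size l = n.

(* For a partition with distinct parts the hook lengths along the first row,
   read from right to left, start at 1, end at the corner hook
   lambda_1 + l - 1, and increase by at most 2 per step. So some hook equals
   s or s+1 unless all hooks are below s, and a d-distinct partition
   (d >= 1) is an (s,s+1)-core iff lambda_1 + l <= s. Those with
   lambda_1 + l = s + 1 correspond, by deleting the first part, to the
   d-distinct partitions mu with mu_1 + size mu <= s - d, which gives the
   recursion. *)

From mathcomp Require Import all_boot zify.
Set Implicit Arguments. Unset Strict Implicit. Unset Printing Implicit Defensive.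

Section Cardinality.
Implicit Types (P Q : seq nat -> Prop) (m n : nat).

Lemma has_card_ext P Q n : (forall x, P x <-> Q x) -> has_card P n -> has_card Q n.
Proof.
move=> PQ [l [Ul [Pl <-]]]; exists l; split=> //; split=> // x.
exact: iff_trans (Pl x) (PQ x).
Qed.

Lemma has_card_unique P m n : has_card P m -> has_card P n -> m = n.
Proof.
move=> [l [Ul [Pl <-]]] [l' [Ul' [Pl' <-]]].
by apply/perm_size/uniq_perm => // x; apply/idP/idP => [/(Pl x)/(Pl' x)|/(Pl' x)/(Pl x)].
Qed.

Lemma has_card1 a : has_card (fun x => x = a) 1.
Proof. by exists [:: a]; split=> //; split=> // x; rewrite inE; split=> [/eqP|->]. Qed.

Lemma has_cardU P Q m n : (forall x, P x -> Q x -> False) ->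
  has_card P m -> has_card Q n -> has_card (fun x => P x \/ Q x) (m + n).
Proof.
move=> PQ0 [l [Ul [Pl <-]]] [l' [Ul' [Pl' <-]]].
exists (l ++ l'); split; last split; last by rewrite size_cat.
- rewrite cat_uniq Ul Ul' andbT /=; apply/hasPn => x /(Pl' x) Qx.
  by apply/negP => /(Pl x) Px; apply: (PQ0 x).
- move=> x; rewrite mem_cat.
  by split=> [/orP[/(Pl x)|/(Pl' x)]|[/(Pl x)|/(Pl' x)] ->]; rewrite ?orbT; auto.
Qed.

Lemma has_card_inj_image P n (f : seq nat -> seq nat) : injective f ->
  has_card P n -> has_card (fun x => exists2 y, P y & x = f y) n.
Proof.
move=> inj_f [l [Ul [Pl <-]]]; exists (map f l); rewrite size_map map_inj_uniq //.
split=> //; split=> // x.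
by split=> [/mapP[y /(Pl y) Py ->]|[y /(Pl y) ly ->]]; [exists y|exact: map_f].
Qed.

End Cardinality.

Definition gap (d : nat) : rel nat := fun a b => b + d <= a.

Lemma gap_trans d : transitive (gap d).
Proof. by rewrite /gap => b a c; lia. Qed.

Lemma d_distinct_sorted d x : d_distinct d x <-> sorted (gap d) x.
Proof. by split=> [?|/(sortedP 0)//]; apply/(sortedP 0). Qed.

Definition dpart (d : nat) (x : seq nat) : bool :=
  all (fun y => 0 < y) x && sorted (gap d) x.

Lemma dpart_sorted_geq d x : dpart d x -> sorted geq x.
Proof. by case/andP=> _; apply: sub_sorted => a b; rewrite /gap /=; lia. Qed.

Lemma dpart_uniq d x : 0 < d -> dpart d x -> uniq x.
Proof.
move=> d_gt0 /andP[_]; apply: sorted_uniq; first exact: gap_trans.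
by rewrite /gap => a; lia.
Qed.

Lemma count_gt_leS k m : uniq m ->
  count (fun y => k < y) m <= count (fun y => k.+1 < y) m + 1.
Proof.
move=> Um; have -> : count (fun y => k < y) m =
    count (fun y => k.+1 < y) m + count_mem k.+1 m.
  by elim: m {Um} => //= y m ->; case: (ltngtP y k.+1) => H; lia.
by rewrite count_uniq_mem // leq_add2l leq_b1.
Qed.

Lemma nat_crossing (g : nat -> nat) s n : g n <= s.+1 -> s <= g 0 ->
  (forall k, k < n -> g k <= g k.+1 + 2) -> exists2 k, k <= n & s <= g k <= s.+1.
Proof.
elim: n g => [|n IHn] g gn_le g0_ge step; first by exists 0 => //; lia.
case: (leqP s (g 1)) => [g1_ge|g1_lt].
  have [k k_le gk] := IHn (g \o succn) gn_le g1_ge (fun k lt_kn => step k.+1 lt_kn).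
  by exists k.+1.
by exists 0 => //; have := step 0 isT; lia.
Qed.

Lemma hook0 a m j : hook (a :: m) 0 j = a - j.+1 + count (fun y => j < y) m + 1.
Proof. by rewrite /hook /= drop0. Qed.

Lemma hook_lt_corner x i j : sorted geq x -> is_box x i j ->
  hook x i j < head 0 x + size x.
Proof.
case: x => [|a m] x_sorted [i_lt j_lt] //=.
have nth_le : nth 0 (a :: m) i <= a.
  case: i i_lt {j_lt} => [|i] //=; rewrite ltnS => i_lt.
  have /allP := order_path_min (rev_trans leq_trans) x_sorted.
  by apply; apply: mem_nth.
have := count_size (fun y => j < y) (drop i.+1 (a :: m)).
rewrite /hook size_drop /=; move: i_lt j_lt nth_le => /=; lia.
Qed.

Lemma ss1_core_dpartE d s x : 0 < d -> dpart d x ->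
  is_ss1_core s x <-> head 0 x + size x <= s.
Proof.
move=> d_gt0 x_dpart; split; last first.
  by move=> bound i j box; have := hook_lt_corner (dpart_sorted_geq x_dpart) box; lia.
case: x x_dpart => [//|a m] x_dpart core /=; rewrite leqNgt; apply/negP => big.
have /and3P[a_gt0 m_pos a_path] :
    [&& 0 < a, all (fun y => 0 < y) m & path (gap d) a m].
  by move: x_dpart; rewrite /dpart /= -andbA.
have /andP[_ m_uniq] := dpart_uniq d_gt0 x_dpart.
have last_hook : hook (a :: m) 0 a.-1 <= s.+1.
  have below_a : all (gap d a) m := order_path_min (@gap_trans d) a_path.
  rewrite hook0; have -> : count (fun y => a.-1 < y) m = 0.
    apply/eqP; rewrite eqn0Ngt -has_count; apply/hasPn => y /(allP below_a).
    by rewrite /gap; lia.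
  lia.
have first_hook : s <= hook (a :: m) 0 0.
  by move: m_pos; rewrite hook0 all_count => /eqP ->; move: big => /=; lia.
(* One step right shortens the arm by one and, the parts being distinct,
   the leg by at most one. *)
have step k : k < a.-1 -> hook (a :: m) 0 k <= hook (a :: m) 0 k.+1 + 2.
  by rewrite !hook0; have := count_gt_leS k m_uniq; lia.
have [k k_le hook_k] := nat_crossing last_hook first_hook step.
have box : is_box (a :: m) 0 k by split=> //=; lia.
by have [] := core 0 k box; lia.
Qed.

Section Counting.
Variable d : nat.

(* [head 0 x + size x - 1] is the hook length of the corner box, the largest
   one. *)
Definition small_dpart s x := dpart d x && (head 0 x + size x <= s).
Definition tight_dpart s x := dpart d x && (head 0 x + size x == s).

Lemma small_dpart_le1 s x : s <= 1 -> small_dpart s x = (x == [::]).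
Proof.
case: x => [|a m] s_le1 //; apply/negbTE/negP.
by case/andP=> /andP[/= /andP[a_gt0 _] _]; lia.
Qed.

Lemma small_dpartS s x : small_dpart s.+1 x = small_dpart s x || tight_dpart s.+1 x.
Proof. by rewrite /small_dpart /tight_dpart [_ <= s.+1]leq_eqVlt ltnS andb_orr orbC. Qed.

Lemma tight_dpartSS s x : tight_dpart s.+2 x <->
  exists2 mu, small_dpart (s.+2 - d.+1) mu & x = (s.+1 - size mu) :: mu.
Proof.
split.
- case: x => [|a mu] //; rewrite /tight_dpart /small_dpart /dpart /=.
  case/andP=> /andP[/andP[a_gt0 mu_pos] a_path] /eqP size_eq.
  exists mu; last by congr cons; lia.
  rewrite mu_pos (path_sorted a_path) /=.
  case: mu a_path size_eq {mu_pos} => [|b m] //= /andP[gap_ab _].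
  by rewrite /gap in gap_ab; lia.
- case=> mu /andP[/andP[mu_pos mu_sorted] bound] ->.
  rewrite /tight_dpart /dpart /= mu_pos.
  case: mu mu_pos mu_sorted bound => [|b m] /=; first lia.
  by case/andP=> b_gt0 _ -> bound; rewrite /gap; lia.
Qed.

Lemma has_card_small_dpart_le1 s : s <= 1 -> has_card (small_dpart s) 1.
Proof.
move=> s_le1; apply: has_card_ext (has_card1 [::]) => x.
by rewrite small_dpart_le1 //; split=> [->|/eqP].
Qed.

Lemma has_card_small_dpartSS s m n :
  has_card (small_dpart s.+1) m -> has_card (small_dpart (s.+2 - d.+1)) n ->
  has_card (small_dpart s.+2) (m + n).
Proof.
move=> card_m card_n.
have cons_inj : injective (fun mu => (s.+1 - size mu) :: mu) by move=> u v [_].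
have disj x : small_dpart s.+1 x ->
    (exists2 mu, small_dpart (s.+2 - d.+1) mu & x = (s.+1 - size mu) :: mu) -> False.
  by move=> /andP[_ bound] /tight_dpartSS /andP[_ /eqP]; lia.
apply: has_card_ext (has_cardU disj card_m (has_card_inj_image cons_inj card_n)) => x.
rewrite [small_dpart s.+2 x]small_dpartS -tight_dpartSS.
by split=> [[->|->]|/orP[]]; rewrite ?orbT; auto.
Qed.

Lemma small_dpart_card s : {n | has_card (small_dpart s) n}.
Proof.
elim/ltn_ind: s => -[|[|s]] IH; try by exists 1; apply: has_card_small_dpart_le1.
have [m card_m] := IH s.+1 (ltnSn _).
have [n card_n] := IH (s.+2 - d.+1) ltac:(lia).
by exists (m + n); apply: has_card_small_dpartSS.
Qed.

Definition card_small_dpart s := sval (small_dpart_card s).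

Lemma card_small_dpartP s : has_card (small_dpart s) (card_small_dpart s).
Proof. exact: svalP. Qed.

Lemma card_small_dpart_le1 s : s <= 1 -> card_small_dpart s = 1.
Proof.
move=> s_le1.
exact: has_card_unique (card_small_dpartP s) (has_card_small_dpart_le1 s_le1).
Qed.

Lemma card_small_dpartSS s :
  card_small_dpart s.+2 = card_small_dpart s.+1 + card_small_dpart (s.+2 - d.+1).
Proof.
apply: has_card_unique (card_small_dpartP _) _.
exact: has_card_small_dpartSS (card_small_dpartP _) (card_small_dpartP _).
Qed.

End Counting.

Lemma core_ddistinctE d s x : 0 < d -> core_ddistinct d s x <-> small_dpart d s x.
Proof.
move=> d_gt0; rewrite /core_ddistinct /is_partition d_distinct_sorted /small_dpart.
split=> [[[_ x_pos] [x_sorted core]]|/andP[x_dpart bound]].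
  have x_dpart : dpart d x by rewrite /dpart x_pos.
  by rewrite x_dpart -(ss1_core_dpartE s d_gt0 x_dpart).
have /andP[x_pos x_sorted] := x_dpart.
split; first by split; [exact: dpart_sorted_geq x_dpart|].
by split; last exact/(ss1_core_dpartE s d_gt0 x_dpart).
Qed.

Theorem mainTheorem4 (d : nat) (hd : 1 <= d) :
  exists N : nat -> nat,
    (forall s, 1 <= s -> has_card (core_ddistinct d s) (N s)) /\
    (forall s, 1 <= s <= d.+1 -> N s = s) /\
    (forall s, d.+2 <= s -> N s = N (s - 1) + N (s - d.+1)).
Proof.
exists (card_small_dpart d); split; [|split].
- move=> s _; apply: has_card_ext (card_small_dpartP d s) => x.
  exact: iff_sym (core_ddistinctE s x hd).
- elim=> [//|[|s] IHs] /andP[_ s_le]; first exact: card_small_dpart_le1.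
  rewrite card_small_dpartSS IHs; last lia.
  by rewrite card_small_dpart_le1 ?addn1 //; lia.
- case=> [|[|s]] // _; exact: card_small_dpartSS.
Qed.
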